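(* Let $G$ be a finite graph with no isolated vertices. If the order of $G$ is even, then there is no nontrivial circuit injection $f:G_M\rightarrow B$ with $B$ a binary matroid if and only if $G$ is Hamiltonian. If the order of $G$ is odd, then there is no nontrivial circuit injection $f:G_M\rightarrow B$ with $B$ a binary matroid if and only if $G$ is almost Hamiltonian.
   Context: Graphs are undirected without loops or multiple edges. The order of $G$ is its number of vertices. $G_M$ is the cycle matroid of $G$: cells are the edges of $G$ and circuits are the edge sets of circuits (cycles) of $G$. A matroid is a pair $(S,\mathscr{C})$, $S\neq\emptyset$, $\mathscr{C}\subseteq 2^S$, satisfying: (I) $A,B\in\mathscr{C}$, $A\subseteq B$ implies $A=B$; (II) $A,B\in\mathscr{C}$, $a\in A\cap B$, $b\in (A\cup B)\setminus(A\cap B)$ implies there exists $D\in\mathscr{C}$ with $D\subseteq A\cup B$, $a\notin D$, $b\in D$. A matroid $(S,\mathscr{C})$ is binary if for all $A,B\in\mathscr{C}$ the symmetric difference $A\oplus B=(A\cup B)\setminus(A\cap B)$ is a union of pairwise disjoint members of $\mathscr{C}$. A circuit injection $f:G_M\rightarrow B$ is a bijection from $E(G)$ onto the cells of $B$ sending each circuit of $G$ to a circuit of $B$; it is nontrivial if $B$ has a circuit which is not the image of any circuit of $G$. $G$ is Hamiltonian if it has a circuit containing all its vertices. A graph of order $n$ is almost Hamiltonian if every set of $n-1$ of its vertices is contained in (the vertex set of) some circuit of $G$. *)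

From mathcomp Require Import all_boot.
Set Implicit Arguments. Unset Strict Implicit. Unset Printing Implicit Defensive.

Definition simple_graph (V : finType) (adj : rel V) : Prop :=
  symmetric adj /\ irreflexive adj.

Definition edges (V : finType) (adj : rel V) : {set {set V}} :=
  [set e : {set V} | [exists x, exists y, adj x y && (e == [set x; y])]].

Definition graph_cycle (V : finType) (adj : rel V) (p : seq V) : Prop :=
  [/\ uniq p, 2 < size p & cycle adj p].

Definition cycle_edges (V : finType) (p : seq V) : {set {set V}} :=
  [set [set x; next p x] | x in p].

(* D is a circuit of the cycle matroid G_M: the edge set of a circuit of G. *)
Definition graph_circuit (V : finType) (adj : rel V) (D : {set {set V}}) : Prop :=
  exists p, graph_cycle adj p /\ D = cycle_edges p.

Definition hamiltonian (V : finType) (adj : rel V) : Prop :=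
  exists p, graph_cycle adj p /\ forall v : V, v \in p.

Definition almost_hamiltonian (V : finType) (adj : rel V) : Prop :=
  forall X : {set V}, #|X| = #|V|.-1 ->
    exists p, graph_cycle adj p /\ {subset X <= p}.

Definition matroid (S : finType) (C : {set {set S}}) : Prop :=
  [/\ [set: S] != set0,
      (forall A B, A \in C -> B \in C -> A \subset B -> A = B) &
      (forall A B a b, A \in C -> B \in C -> a \in A :&: B ->
          b \in (A :|: B) :\: (A :&: B) ->
          exists2 D, D \in C & [/\ D \subset A :|: B, a \notin D & b \in D])].

Definition binary (S : finType) (C : {set {set S}}) : Prop :=
  forall A B, A \in C -> B \in C ->
    exists P : {set {set S}},
      [/\ P \subset C,
          (forall X Y, X \in P -> Y \in P -> X != Y -> [disjoint X & Y]) &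
          \bigcup_(X in P) X = (A :|: B) :\: (A :&: B)].

Definition circuit_injection (V : finType) (adj : rel V) (S : finType)
    (C : {set {set S}}) (f : {set V} -> S) : Prop :=
  [/\ {in edges adj &, injective f},
      f @: edges adj = [set: S] &
      forall D, graph_circuit adj D -> f @: D \in C].

Definition nontrivial_ci (V : finType) (adj : rel V) (S : finType)
    (C : {set {set S}}) (f : {set V} -> S) : Prop :=
  exists2 X, X \in C & forall D, graph_circuit adj D -> f @: D <> X.

Definition no_nontrivial_binary_ci (V : finType) (adj : rel V) : Prop :=
  forall (S : finType) (C : {set {set S}}) (f : {set V} -> S),
    matroid C -> binary C -> circuit_injection adj C f -> ~ nontrivial_ci adj C f.

From mathcomp Require Import all_boot zify.
From Stdlib Require Import Classical.
Set Implicit Arguments. Unset Strict Implicit. Unset Printing Implicit Defensive.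

(* Write odd_vertices X for the set of odd-degree vertices of an edge set X, its
   mod 2 boundary: it is additive for symmetric difference, circuits have empty
   boundary, and every boundaryless edge set is a symmetric difference of circuits.
   Both sides of the theorem are equivalent to: every nonempty even vertex set lies
   on a circuit; for n even this is Hamiltonicity, for n odd almost Hamiltonicity.

   In a binary matroid, disjoint unions of circuits are closed under symmetric
   difference, so a circuit injection f maps boundaryless edge sets to such unions.
   Let X be the preimage of a circuit of B, with boundary T. If T is empty, X
   contains a circuit of G, whose image is the whole circuit by minimality. If not,
   T lies on a circuit p of G, which contains an edge set P with boundary T; then
   f(P), the symmetric difference of f(X) and the image of the boundaryless set
   symdiff X P, is a union of circuits inside f(p), so P = p and T is empty after
   all.

   Conversely, let T be a nonempty even set on no circuit; we may assume that T is
   the boundary of some edge set (if G is not connected, use two edges in different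
   components). The minimal nonempty edge sets with boundary empty or T are the
   circuits of a binary matroid containing every circuit of G and one more, with
   boundary T. *)

Section SymmetricDifference.

Variable T : finType.
Implicit Types A B D : {set T}.

Definition symdiff A B : {set T} := [set x | (x \in A) (+) (x \in B)].

Lemma in_symdiff A B x : (x \in symdiff A B) = (x \in A) (+) (x \in B).
Proof. by rewrite inE. Qed.

Lemma symdiffE A B : (A :|: B) :\: (A :&: B) = symdiff A B.
Proof. by apply/setP=> x; rewrite !inE; case: (x \in A); case: (x \in B). Qed.

Lemma symdiffC A B : symdiff A B = symdiff B A.
Proof. by apply/setP=> x; rewrite !in_symdiff addbC. Qed.

Lemma symdiffA A B D : symdiff A (symdiff B D) = symdiff (symdiff A B) D.
Proof. by apply/setP=> x; rewrite !in_symdiff addbA. Qed.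

Lemma symdiffs0 A : symdiff A set0 = A.
Proof. by apply/setP=> x; rewrite in_symdiff inE addbF. Qed.

Lemma symdiff0s A : symdiff set0 A = A.
Proof. by rewrite symdiffC symdiffs0. Qed.

Lemma symdiffss A : symdiff A A = set0.
Proof. by apply/setP=> x; rewrite in_symdiff inE addbb. Qed.

Lemma symdiffK A B : symdiff A (symdiff A B) = B.
Proof. by rewrite symdiffA symdiffss symdiff0s. Qed.

Lemma symdiff_subset A B D : A \subset D -> B \subset D -> symdiff A B \subset D.
Proof.
move=> /subsetP sAD /subsetP sBD; apply/subsetP=> x; rewrite in_symdiff.
by case Ax: (x \in A) => /=; [move=> _; apply: sAD | apply: sBD].
Qed.

Lemma symdiff_subsetr A B : B \subset A -> symdiff A B = A :\: B.
Proof.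
move=> /subsetP sBA; apply/setP=> x; rewrite in_symdiff !inE.
by case Bx: (x \in B); rewrite ?(sBA x Bx) ?addbF.
Qed.

Lemma symdiff_disjoint A B : [disjoint A & B] -> symdiff A B = A :|: B.
Proof.
move=> dAB; apply/setP=> x; rewrite in_symdiff inE.
by case Ax: (x \in A); rewrite ?(disjointFr dAB Ax) ?addbF.
Qed.

Lemma symdiff_set2 x y : x != y -> symdiff [set x] [set y] = [set x; y].
Proof.
move=> xy; apply/setP=> z; rewrite in_symdiff !inE.
by case: (eqVneq z x) => [->|]; rewrite ?(negbTE xy) ?addbF.
Qed.

Lemma card_symdiff A B : #|symdiff A B| + 2 * #|A :&: B| = #|A| + #|B|.
Proof.
have sIU : A :&: B \subset A :|: B := subset_trans (subsetIl A B) (subsetUl A B).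
by rewrite -symdiffE cardsDS // -cardsUI; have := subset_leq_card sIU; lia.
Qed.

Lemma odd_card_symdiff A B : odd #|symdiff A B| = odd #|A| (+) odd #|B|.
Proof. by rewrite -oddD -card_symdiff oddD oddM andFb addbF. Qed.

End SymmetricDifference.

Section InjectiveImage.

Variables (aT rT : finType) (f : aT -> rT) (D : {set aT}).
Hypothesis injf : {in D &, injective f}.
Implicit Types X Y : {set aT}.

Lemma mem_imset_in x X : x \in D -> X \subset D -> (f x \in f @: X) = (x \in X).
Proof.
move=> xD sXD; apply/imsetP/idP => [[y yX /injf fxy]|]; last by exists x.
by rewrite fxy // (subsetP sXD).
Qed.

Lemma imset_subset_in X Y : X \subset D -> Y \subset D -> (f @: X \subset f @: Y) = (X \subset Y).
Proof.
move=> sXD sYD; apply/idP/idP => [/subsetP sfXY|/imsetS] //.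
by apply/subsetP=> x xX; rewrite -(mem_imset_in _ sYD) ?sfXY ?imset_f ?(subsetP sXD).
Qed.

Lemma imset_symdiff X Y : X \subset D -> Y \subset D ->
  f @: symdiff X Y = symdiff (f @: X) (f @: Y).
Proof.
move=> sXD sYD; have sXYD := symdiff_subset sXD sYD.
apply/setP=> z; rewrite in_symdiff; have [/imsetP[x xD ->]|zD] := boolP (z \in f @: D).
  by rewrite !mem_imset_in ?in_symdiff.
by rewrite !(contraNF (subsetP (imsetS f _) z) zD).
Qed.

End InjectiveImage.

Section DisjointCircuitUnions.

Variables (S : finType) (C : {set {set S}}).

Definition disjoint_union_of (Y : {set S}) : Prop :=
  exists P : {set {set S}},
    [/\ P \subset C,
        (forall X Z, X \in P -> Z \in P -> X != Z -> [disjoint X & Z]) &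
        \bigcup_(X in P) X = Y].

Lemma binaryE :
  binary C <-> forall A B, A \in C -> B \in C -> disjoint_union_of (symdiff A B).
Proof. by split=> bC A B AC BC; [rewrite -symdiffE | rewrite symdiffE]; apply: bC. Qed.

Lemma disjoint_union_of0 : disjoint_union_of set0.
Proof.
by exists set0; split=> [||]; rewrite ?sub0set ?big_set0 // => X Z; rewrite inE.
Qed.

Lemma disjoint_union_of1 A : A \in C -> disjoint_union_of A.
Proof.
move=> AC; exists [set A]; split; rewrite ?sub1set ?big_set1 //.
by move=> X Z /set1P-> /set1P->; rewrite eqxx.
Qed.

Lemma disjoint_union_ofU A Y :
  A \in C -> disjoint_union_of Y -> [disjoint A & Y] -> disjoint_union_of (A :|: Y).
Proof.
move=> AC [P [PC Pdisj <-]] dAY; exists (A |: P); split.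
- by rewrite subUset sub1set AC.
- have dA X : X \in P -> [disjoint A & X].
    by move=> XP; apply: disjointWr dAY; apply: bigcup_sup XP.
  move=> X Z /setU1P[->|XP] /setU1P[->|ZP]; rewrite ?eqxx //.
  + by move=> _; apply: dA.
  + by move=> _; rewrite disjoint_sym; apply: dA.
  + exact: Pdisj.
- by rewrite bigcup_setU big_set1.
Qed.

Lemma disjoint_union_of_split Y a :
  disjoint_union_of Y -> a \in Y ->
  exists A R, [/\ A \in C, a \in A, disjoint_union_of R, [disjoint A & R] & Y = A :|: R].
Proof.
move=> [P [PC Pdisj <-]] /bigcupP[A AP aA].
exists A, (\bigcup_(X in P :\ A) X); split=> //.
- exact: (subsetP PC A AP).
- exists (P :\ A); split=> //; first exact: subset_trans (subsetDl P _) PC.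
  by move=> X Z /setD1P[_ XP] /setD1P[_ ZP]; apply: Pdisj.
- apply/bigcup_disjointP=> X /setD1P[XA XP].
  by apply: Pdisj; rewrite // eq_sym.
- by rewrite (big_setD1 A AP).
Qed.

Hypothesis binC : binary C.

(* Strong induction on #|Y1| + #|Y2|: peel a circuit A off Y1; if A meets Y2 in
   a circuit B, the binary axiom replaces A and B by the smaller set symdiff A B. *)
Lemma disjoint_union_of_symdiff Y1 Y2 :
  disjoint_union_of Y1 -> disjoint_union_of Y2 -> disjoint_union_of (symdiff Y1 Y2).
Proof.
move: {2}(#|Y1| + #|Y2|) (leqnn (#|Y1| + #|Y2|)) => n.
elim: n Y1 Y2 => [|n IH] Y1 Y2 sz U1 U2.
  have /eqP -> : Y1 == set0 by rewrite -cards_eq0; lia.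
  by rewrite symdiff0s.
have [->|/set0Pn[a aY1]] := eqVneq Y1 set0; first by rewrite symdiff0s.
have [A [R [AC aA UR dAR eY1]]] := disjoint_union_of_split U1 aY1.
have cY1 : #|Y1| = #|A| + #|R| by rewrite eY1 cardsU (disjoint_setI0 dAR) cards0 subn0.
have A0 : 0 < #|A| by apply/card_gt0P; exists a.
have eY1sd : Y1 = symdiff A R by rewrite eY1 symdiff_disjoint.
have [dAY2|/pred0Pn[b /andP[bA bY2]]] := boolP [disjoint A & Y2].
  have dA : [disjoint A & symdiff R Y2].
    rewrite -setI_eq0; apply/eqP/setP=> x; rewrite !inE.
    by case Ax: (x \in A); rewrite //= (disjointFr dAR Ax) (disjointFr dAY2 Ax).
  rewrite eY1sd -symdiffA symdiff_disjoint //.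
  by apply: disjoint_union_ofU => //; apply: IH => //; lia.
have [B [Q [BC bB UQ dBQ eY2]]] := disjoint_union_of_split U2 bY2.
have cY2 : #|Y2| = #|B| + #|Q| by rewrite eY2 cardsU (disjoint_setI0 dBQ) cards0 subn0.
have AB0 : 0 < #|A :&: B| by apply/card_gt0P; exists b; apply/setIP.
have -> : symdiff Y1 Y2 = symdiff (symdiff A B) (symdiff R Q).
  rewrite eY1sd eY2 -symdiff_disjoint //.
  by apply/setP=> x; rewrite !in_symdiff addbACA.
have UAB : disjoint_union_of (symdiff A B) by move/binaryE: binC; apply.
have cAB := card_symdiff A B; have cRQ := card_symdiff R Q.
have URQ : disjoint_union_of (symdiff R Q) by apply: IH => //; lia.
by apply: IH => //; lia.
Qed.

End DisjointCircuitUnions.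

Section MinimalSets.

Variables (S : finType) (W : pred {set S}).

Definition min_sets : {set {set S}} :=
  [set Z : {set S} | [&& Z != set0, W Z &
     [forall Z' : {set S}, [&& Z' \subset Z, W Z' & Z' != set0] ==> (Z' == Z)]]].

Lemma min_setsP Z :
  reflect [/\ Z != set0, W Z & forall Z' : {set S}, Z' \subset Z -> W Z' -> Z' != set0 -> Z' = Z]
          (Z \in min_sets).
Proof.
rewrite inE; apply: (iffP and3P) => [[Z0 WZ /forallP minZ]|[Z0 WZ minZ]].
  by split=> // Z' sZ' WZ' Z'0; apply/eqP; move/implyP: (minZ Z'); apply; apply/and3P.
split=> //; apply/forallP=> Z'; apply/implyP=> /and3P[sZ' WZ' Z'0].
by rewrite (minZ Z').
Qed.

Lemma min_sets_sub Y : W Y -> Y != set0 -> exists2 Z, Z \in min_sets & Z \subset Y.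
Proof.
move=> WY Y0.
have inY : [&& Y \subset Y, W Y & Y != set0] by rewrite subxx WY Y0.
have [Z /and3P[sZY WZ Z0] minZ] :=
  @arg_minnP _ Y (fun Z : {set S} => [&& Z \subset Y, W Z & Z != set0]) (fun Z => #|Z|) inY.
exists Z => //; apply/min_setsP; split=> // Z' sZ' WZ' Z'0; apply/eqP.
by rewrite eqEcard sZ' minZ // (subset_trans sZ' sZY) WZ' Z'0.
Qed.

Hypothesis W_symdiff : forall A B, W A -> W B -> W (symdiff A B).

Lemma min_sets_decomp Y : W Y -> disjoint_union_of min_sets Y.
Proof.
move: {2}#|Y| (leqnn #|Y|) => n; elim: n Y => [|n IH] Y szY WY.
  by move: szY; rewrite leqn0 cards_eq0 => /eqP->; apply: disjoint_union_of0.
have [->|Y0] := eqVneq Y set0; first exact: disjoint_union_of0.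
have [Z ZC sZY] := min_sets_sub WY Y0.
have [Z0 WZ _] := min_setsP _ ZC.
rewrite -(setID Y Z) (setIidPr sZY); apply: disjoint_union_ofU => //.
  rewrite -symdiff_subsetr //; apply: IH; last exact: W_symdiff.
  by rewrite symdiff_subsetr // cardsDS //; rewrite -card_gt0 in Z0; lia.
by rewrite disjoint_sym; apply/setDidPl; rewrite setDDl setUid.
Qed.

Lemma min_sets_binary : binary min_sets.
Proof.
apply/binaryE=> A B /min_setsP[_ WA _] /min_setsP[_ WB _].
exact/min_sets_decomp/W_symdiff.
Qed.

Lemma min_sets_matroid : [set: S] != set0 -> matroid min_sets.
Proof.
move=> S0; split=> // [A B AC /min_setsP[_ _ minB] sAB|A B a b AC BC aAB bAB].
  by case/min_setsP: AC => A0 WA _; apply: minB.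
have [_ WA _] := min_setsP _ AC; have [_ WB _] := min_setsP _ BC.
have [P [PC _ PU]] := min_sets_decomp (W_symdiff WA WB).
move: bAB; rewrite symdiffE -PU => /bigcupP[D DP bD].
have sDAB : D \subset symdiff A B by rewrite -PU; apply: bigcup_sup DP.
exists D; first exact: (subsetP PC).
split=> //.
  by apply: subset_trans sDAB _; rewrite -symdiffE subsetDl.
apply: contra (subsetP sDAB a) _; rewrite in_symdiff.
by case/setIP: aAB => -> ->.
Qed.

Variables (U : finType) (g : {set S} -> {set U}).
Hypothesis g_symdiff : forall A B, g (symdiff A B) = symdiff (g A) (g B).

Lemma min_sets_nonzero Y : W Y -> g Y != set0 -> exists2 X, X \in min_sets & g X != set0.
Proof.
have g0 : g set0 = set0 by rewrite -(symdiffss set0) g_symdiff symdiffss.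
move: {2}#|Y| (leqnn #|Y|) => n; elim: n Y => [|n IH] Y szY WY gY.
  by move: szY gY; rewrite leqn0 cards_eq0 => /eqP->; rewrite g0 eqxx.
have Y0 : Y != set0 by apply: contraNneq gY => ->; rewrite g0.
have [Z ZC sZY] := min_sets_sub WY Y0.
have [gZ|] := eqVneq (g Z) set0; last by exists Z.
have [Z0 WZ _] := min_setsP _ ZC.
apply: (IH (symdiff Y Z)); last by rewrite g_symdiff gZ symdiffs0.
  by rewrite symdiff_subsetr // cardsDS //; rewrite -card_gt0 in Z0; lia.
exact: W_symdiff.
Qed.

End MinimalSets.

Section OddVertices.

Variable V : finType.
Implicit Types (X Y E : {set {set V}}) (v : V).

Definition incident X v : {set {set V}} := [set e in X | v \in e].

Definition odd_vertices X : {set V} := [set v | odd #|incident X v|].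

Lemma odd_vertices_symdiff X Y :
  odd_vertices (symdiff X Y) = symdiff (odd_vertices X) (odd_vertices Y).
Proof.
apply/setP=> v; rewrite !inE -odd_card_symdiff.
have -> // : incident (symdiff X Y) v = symdiff (incident X v) (incident Y v).
by apply/setP=> e; rewrite !inE; case: (v \in e); rewrite ?andbF ?andbT.
Qed.

Lemma odd_vertices0 : odd_vertices set0 = set0.
Proof.
apply/setP=> v; rewrite !inE.
have -> : incident set0 v = set0 by apply/setP=> e; rewrite !inE.
by rewrite cards0.
Qed.

Lemma odd_vertices1 e : odd_vertices [set e] = e.
Proof.
apply/setP=> v; rewrite inE; case ve: (v \in e).
  have -> : incident [set e] v = [set e].
    by apply/setP=> e'; rewrite !inE; case: eqP => // ->.
  by rewrite cards1.
have -> : incident [set e] v = set0.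
  by apply/setP=> e'; rewrite !inE; case: eqP => // ->.
by rewrite cards0.
Qed.

Lemma odd_vertices_sub X : {subset odd_vertices X <= \bigcup_(e in X) e}.
Proof.
move=> v; rewrite inE => /odd_gt0/card_gt0P[e]; rewrite inE => /andP[eX ve].
by apply/bigcupP; exists e.
Qed.

Lemma even_card_odd_vertices X :
  {in X, forall e : {set V}, ~~ odd #|e|} -> ~~ odd #|odd_vertices X|.
Proof.
move: {2}#|X| (erefl #|X|) => n; elim: n X => [|n IH] X szX evX.
  by move/eqP: szX; rewrite cards_eq0 => /eqP->; rewrite odd_vertices0 cards0.
have /card_gt0P[e eX] : 0 < #|X| by rewrite szX.
have -> : X = symdiff [set e] (X :\ e).
  by rewrite symdiff_disjoint ?setD1K // disjoint_sym; apply/setDidPl; rewrite setDDl setUid.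
rewrite odd_vertices_symdiff odd_card_symdiff odd_vertices1 (negbTE (evX e eX)) /=.
apply: IH => [|e' /setD1P[_]]; last exact: evX.
by move: szX; rewrite (cardsD1 e X) eX add1n => -[].
Qed.

Definition boundary_in (E : {set {set V}}) (T : {set V}) : Prop :=
  exists2 P : {set {set V}}, P \subset E & odd_vertices P = T.

Lemma boundary_in0 E : boundary_in E set0.
Proof. by exists set0; rewrite ?sub0set ?odd_vertices0. Qed.

Lemma boundary_in_symdiff E A B :
  boundary_in E A -> boundary_in E B -> boundary_in E (symdiff A B).
Proof.
case=> [P sPE <-] [Q sQE <-]; exists (symdiff P Q); last exact: odd_vertices_symdiff.
exact: symdiff_subset.
Qed.

Lemma boundary_in_set2 E x y : [set x; y] \in E -> boundary_in E [set x; y].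
Proof. by exists [set [set x; y]]; rewrite ?sub1set ?odd_vertices1. Qed.

End OddVertices.

Section CycleEdges.

Variables (V : finType) (p : seq V).
Hypotheses (Up : uniq p) (sp : 2 < size p).

Lemma next_ind (Q : pred V) x :
  x \in p -> Q x -> {in p, forall z, Q z -> Q (next p z)} -> {in p, forall y, Q y}.
Proof.
move=> xp Qx QS y yp.
have -> : y = iter (findex (next p) x y) (next p) x.
  by rewrite iter_findex // (fconnect_cycle (cycle_next Up) xp).
elim: (findex _ x y) => [|k IHk] //=.
suff kp : iter k (next p) x \in p by apply: QS.
by elim: k {IHk} => //= k IHk; rewrite mem_next.
Qed.

Lemma next_neq x : x \in p -> next p x != x /\ next p (next p x) != x.
Proof.
move=> xp; have := orbit_uniq (next p) x.
rewrite /orbit (order_cycle (cycle_next Up) Up xp).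
case: (size p) sp => [|[|[|n]]] //= _; rewrite !inE !negb_or.
by case/andP=> /and3P[xn xnn _] _; rewrite !(eq_sym _ x).
Qed.

Lemma cycle_edgesP e :
  reflect (exists2 x, x \in p & e = [set x; next p x]) (e \in cycle_edges p).
Proof. exact: imsetP. Qed.

Lemma cycle_edges_vertex e v : e \in cycle_edges p -> v \in e -> v \in p.
Proof. by case/cycle_edgesP=> x xp -> /set2P[|] ->; rewrite ?mem_next. Qed.

Lemma cycle_edges_neq0 : cycle_edges p != set0.
Proof.
have [x xp] : exists x, x \in p by case: (p) sp => // x q _; exists x; rewrite mem_head.
by apply/set0Pn; exists [set x; next p x]; apply/cycle_edgesP; exists x.
Qed.

Lemma incident_cycle_edges v : v \in p ->
  incident (cycle_edges p) v = [set [set v; next p v]; [set prev p v; v]].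
Proof.
move=> vp; apply/setP=> e; rewrite !inE; apply/andP/orP.
  case=> /cycle_edgesP[x xp ->] /set2P[->|vnx]; first by left.
  by right; rewrite vnx prev_next.
case=> /eqP->; split; rewrite ?inE ?eqxx ?orbT //; apply/cycle_edgesP.
  by exists v.
by exists (prev p v); rewrite ?mem_prev ?next_prev.
Qed.

Lemma odd_vertices_cycle_edges : odd_vertices (cycle_edges p) = set0.
Proof.
apply/setP=> v; rewrite !inE; case vp: (v \in p); last first.
  have -> : incident (cycle_edges p) v = set0.
    apply/setP=> e; rewrite !inE; apply/negP=> /andP[ep ve].
    by rewrite (cycle_edges_vertex ep ve) in vp.
  by rewrite cards0.
rewrite incident_cycle_edges // cards2; case: eqVneq => //= E.
have [_] := next_neq (etrans (mem_prev p v) vp); rewrite next_prev // => nnv.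
have : next p v \in [set prev p v; v] by rewrite -E !inE eqxx orbT.
case/set2P=> Env; first by move: nnv; rewrite -Env eqxx.
by have [] := next_neq vp; rewrite Env eqxx.
Qed.

(* Walking along the circuit from an edge of D, some edge of D is followed by
   one outside D; their common vertex has degree one in D. *)
Lemma odd_vertices_proper_cycle_edges (D : {set {set V}}) :
  D \subset cycle_edges p -> D != set0 -> D != cycle_edges p -> odd_vertices D != set0.
Proof.
move=> sDC D0 DnC; pose Q := fun z => [set z; next p z] \in D.
have [x xp Qx] : exists2 x, x \in p & Q x.
  case/set0Pn: D0 => e eD; case/cycle_edgesP: (subsetP sDC _ eD) => x xp ex.
  by exists x; rewrite /Q -?ex.
have [y yp /andP[Qy nQny]] : exists2 y, y \in p & Q y && ~~ Q (next p y).
  apply/exists_inP; apply: contraR DnC; rewrite negb_exists_in => /forall_inP nQ.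
  rewrite eqEsubset sDC; apply/subsetP=> e /cycle_edgesP[z zp ->].
  apply: (next_ind xp Qx) zp => z' z'p Qz'.
  by have := nQ z' z'p; rewrite Qz' negbK.
apply/set0Pn; exists (next p y); rewrite inE.
have -> : incident D (next p y) = [set [set y; next p y]].
  apply/setP=> e; rewrite !inE; apply/andP/eqP => [[eD ve]|->]; last first.
    by rewrite -/(Q y) Qy !inE eqxx orbT.
  have : e \in incident (cycle_edges p) (next p y) by rewrite inE (subsetP sDC _ eD).
  rewrite incident_cycle_edges ?mem_next // prev_next // !inE => /orP[/eqP E|/eqP //].
  by rewrite /Q -E eD in nQny.
by rewrite cards1.
Qed.

End CycleEdges.

Section SimpleGraph.

Variables (V : finType) (adj : rel V).
Hypothesis sg : simple_graph adj.
Implicit Types (X Y E : {set {set V}}) (T : {set V}).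

Lemma edgesP e : reflect (exists x y, adj x y /\ e = [set x; y]) (e \in edges adj).
Proof.
rewrite inE; apply: (iffP existsP) => [[x /existsP[y /andP[xy /eqP->]]]|[x [y [xy ->]]]].
  by exists x, y.
by exists x; apply/existsP; exists y; rewrite xy eqxx.
Qed.

Lemma adj_neq x y : adj x y -> x != y.
Proof. by case: sg => _ irr; apply: contraTneq => ->; rewrite irr. Qed.

Lemma edges_adj x y : ([set x; y] \in edges adj) = adj x y.
Proof.
case: sg => sym irr; apply/edgesP/idP => [[a [b [ab E]]]|xy]; last by exists x, y.
have : b \in [set x; y] by rewrite E !inE eqxx orbT.
have : a \in [set x; y] by rewrite E !inE eqxx.
case/set2P=> Ea /set2P[] Eb; rewrite Ea Eb in ab; rewrite // ?irr // in ab.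
by rewrite sym.
Qed.

Lemma card_edge e : e \in edges adj -> #|e| = 2.
Proof. by case/edgesP=> x [y [/adj_neq xy ->]]; rewrite cards2 xy. Qed.

Lemma cycle_edges_sub p : cycle adj p -> cycle_edges p \subset edges adj.
Proof. by move=> cp; apply/subsetP=> e /imsetP[x xp ->]; rewrite edges_adj next_cycle. Qed.

Lemma edge_at e x : e \in edges adj -> x \in e -> exists2 w, adj x w & e = [set x; w].
Proof.
case: sg => sym _; case/edgesP=> a [b [ab ->]] /set2P[]->; first by exists b.
by exists a; rewrite 1?sym // setUC.
Qed.

Section EvenSubgraph.

Variable X : {set {set V}}.
Hypotheses (sXE : X \subset edges adj) (evenX : odd_vertices X = set0).

Let rX : rel V := [rel x y | [set x; y] \in X].

Lemma other_neighbour x y :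
  [set x; y] \in X -> exists2 w, [set x; w] \in X & w \notin [:: x; y].
Proof.
move=> xyX; have : x \notin odd_vertices X by rewrite evenX inE.
rewrite inE (cardsD1 [set x; y]) inE xyX !inE eqxx orTb add1n /= negbK.
case/odd_gt0/card_gt0P=> e /setD1P[exy /setIdP[eX xe]].
have [w xw ew] := edge_at (subsetP sXE e eX) xe.
exists w; first by rewrite -ew.
rewrite !inE negb_or eq_sym adj_neq //=; apply: contra exy => /eqP wy.
by rewrite ew wy.
Qed.

Lemma rel_cycle_graph_cycle q :
  uniq q -> 2 < size q -> cycle rX q -> graph_cycle adj q /\ cycle_edges q \subset X.
Proof.
move=> Uq sq cq; split.
  by split=> //; apply: sub_cycle cq => x y /= /(subsetP sXE); rewrite edges_adj.
by apply/subsetP=> e /imsetP[x xq ->]; apply: (next_cycle cq).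
Qed.

Lemma extend_path_or_cycle x y t : uniq [:: x, y & t] -> path rX x (y :: t) ->
  (exists p, graph_cycle adj p /\ cycle_edges p \subset X) \/
  (exists w, uniq [:: w, x, y & t] /\ path rX w [:: x, y & t]).
Proof.
move=> Us ps; have [w xw] := other_neighbour (andP ps).1.
rewrite !inE negb_or => /andP[wx wy].
have wxX : rX w x by rewrite /rX /= setUC.
have [wt|wt] := boolP (w \in t); last first.
  right; exists w; split; last by rewrite /= wxX.
  by rewrite cons_uniq Us !inE (negbTE wx) (negbTE wy) wt.
left; case/splitPr: t / wt Us ps => t1 t2 Us ps.
exists (x :: y :: rcons t1 w); apply: rel_cycle_graph_cycle.
- by move: Us; rewrite -cat_rcons -cat_cons -cat_cons cat_uniq => /andP[].
- by rewrite /= size_rcons.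
- move: ps; rewrite -cat_cons -cat_rcons cat_path => /andP[pw _].
  by rewrite [cycle _ _]/= rcons_path last_rcons wxX andbT.
Qed.

Lemma find_cycle : X != set0 -> exists p, graph_cycle adj p /\ cycle_edges p \subset X.
Proof.
suff grow : forall k x y t, #|V| - size [:: x, y & t] <= k -> uniq [:: x, y & t] ->
    path rX x (y :: t) -> exists p, graph_cycle adj p /\ cycle_edges p \subset X.
  case/set0Pn=> e eX; have [x [y [xy exy]]] := edgesP _ (subsetP sXE e eX).
  apply: (grow #|V| x y [::]); first exact: leq_subr.
    by rewrite /= inE andbT adj_neq.
  by rewrite /= andbT /rX /= -exy.
elim=> [|k IH] x y t szk Us ps; case: (extend_path_or_cycle Us ps) => // [[w [Uw pw]]].
  have := max_card [set z in [:: w, x, y & t]]; rewrite cardsE (card_uniqP Uw).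
  by move: szk => /=; lia.
by apply: IH Uw pw; move: szk => /=; lia.
Qed.

End EvenSubgraph.

Lemma even_edge_set_ind (K : {set {set V}} -> Prop) :
  K set0 -> (forall p, graph_cycle adj p -> K (cycle_edges p)) ->
  (forall X Y, X \subset edges adj -> Y \subset edges adj -> K X -> K Y -> K (symdiff X Y)) ->
  forall X, X \subset edges adj -> odd_vertices X = set0 -> K X.
Proof.
move=> K0 Kcycle Ksymdiff X; move: {2}#|X| (leqnn #|X|) => n.
elim: n X => [|n IH] X szX sXE evenX.
  by move: szX; rewrite leqn0 cards_eq0 => /eqP->.
have [->|X0] := eqVneq X set0; first exact: K0.
have [p [[Up sp cp] sCX]] := find_cycle sXE evenX X0.
have sCE := cycle_edges_sub cp.
rewrite -(symdiffK (cycle_edges p) X); apply: Ksymdiff => //.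
- exact: symdiff_subset.
- exact: Kcycle.
- apply: IH; last by rewrite odd_vertices_symdiff odd_vertices_cycle_edges // evenX symdiffss.
    rewrite symdiffC symdiff_subsetr // cardsDS //.
    by have := cycle_edges_neq0 sp; rewrite -card_gt0; lia.
  exact: symdiff_subset.
Qed.

Lemma boundary_in_connect E a b : E \subset edges adj ->
  connect [rel x y | [set x; y] \in E] a b -> boundary_in E (symdiff [set a] [set b]).
Proof.
move=> sEE /connectP[s]; elim: s a => [|c s IH] a /=.
  by move=> _ ->; rewrite symdiffss; apply: boundary_in0.
case/andP=> acE ps /(IH c ps) Bcb.
rewrite -(symdiffK [set c] [set b]) symdiffA; apply: boundary_in_symdiff => //.
by rewrite symdiff_set2 ?adj_neq -?edges_adj ?(subsetP sEE) //; apply: boundary_in_set2.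
Qed.

Lemma boundary_in_even E (Z T : {set V}) : E \subset edges adj ->
  {in Z &, forall a b, connect [rel x y | [set x; y] \in E] a b} ->
  T \subset Z -> ~~ odd #|T| -> boundary_in E T.
Proof.
move=> sEE connZ; move: {2}#|T| (leqnn #|T|) => n.
elim: n T => [|n IH] T szT sTZ evenT.
  by move: szT; rewrite leqn0 cards_eq0 => /eqP->; apply: boundary_in0.
have [->|/set0Pn[a aT]] := eqVneq T set0; first exact: boundary_in0.
have /card_gt0P[b /setD1P[ba bT]] : 0 < #|T :\ a|.
  by move: evenT; rewrite (cardsD1 a) aT add1n /= negbK => /odd_gt0.
have -> : T = symdiff (symdiff [set a] [set b]) (T :\ a :\ b).
  apply/setP=> x; rewrite !in_symdiff !inE.
  case: (eqVneq x a) => [->|xa]; first by rewrite aT eq_sym (negbTE ba) andbF.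
  by case: (eqVneq x b) => [->|xb]; rewrite ?bT ?eqxx ?andbF ?xa ?xb.
apply: boundary_in_symdiff.
  by apply: boundary_in_connect => //; apply: connZ; apply: (subsetP sTZ).
apply: IH.
- by move: szT; rewrite (cardsD1 a T) (cardsD1 b (T :\ a)) aT !inE ba bT; lia.
- exact: subset_trans (subsetDl _ _) (subset_trans (subsetDl _ _) sTZ).
- by move: evenT; rewrite (cardsD1 a T) (cardsD1 b (T :\ a)) aT !inE ba bT /= negbK.
Qed.

Lemma boundary_in_cycle p T : graph_cycle adj p -> {subset T <= p} -> ~~ odd #|T| ->
  boundary_in (cycle_edges p) T.
Proof.
case=> Up _ cp sTp; apply: (boundary_in_even (Z := [set x in p])) (cycle_edges_sub cp) _ _.
  move=> a b; rewrite !inE; apply: connect_cycle; apply: (cycle_from_next Up) => x xp.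
  by apply/cycle_edgesP; exists x.
by apply/subsetP=> x /sTp; rewrite inE.
Qed.

Lemma boundary_in_connected T :
  (forall a b, connect adj a b) -> ~~ odd #|T| -> boundary_in (edges adj) T.
Proof.
move=> connV; apply: (boundary_in_even (Z := setT)) (subxx _) _ (subsetT T).
by move=> a b _ _; rewrite (eq_connect (e' := adj)) // => x y /=; rewrite edges_adj.
Qed.

End SimpleGraph.


Definition even_sets_on_cycles (V : finType) (adj : rel V) : Prop :=
  forall T : {set V}, T != set0 -> ~~ odd #|T| -> exists p, graph_cycle adj p /\ {subset T <= p}.

Section CircuitInjection.

Variables (V : finType) (adj : rel V) (S : finType) (C : {set {set S}}) (f : {set V} -> S).
Hypotheses (sg : simple_graph adj) (mC : matroid C) (bC : binary C).
Hypothesis fC : circuit_injection adj C f.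
Implicit Types (X : {set {set V}}) (p : seq V).

Let injf : {in edges adj &, injective f}. Proof. by case: fC. Qed.

Lemma image_cycle_edges p : graph_cycle adj p -> f @: cycle_edges p \in C.
Proof. by case: fC => _ _ fcirc gp; apply: fcirc; exists p. Qed.

Lemma disjoint_union_of_even X : X \subset edges adj -> odd_vertices X = set0 ->
  disjoint_union_of C (f @: X).
Proof.
move=> sXE evenX.
apply: (even_edge_set_ind sg (K := fun X => disjoint_union_of C (f @: X))) sXE evenX.
- by rewrite imset0; apply: disjoint_union_of0.
- by move=> p gp; apply/disjoint_union_of1/image_cycle_edges.
- move=> Y Z sYE sZE; rewrite (imset_symdiff injf sYE sZE).
  exact: disjoint_union_of_symdiff.
Qed.

Lemma circuit_sub_image_cycle p A : graph_cycle adj p -> A \in C ->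
  A \subset f @: cycle_edges p -> A = f @: cycle_edges p.
Proof. by case: mC => _ minC _ gp AC; apply: minC => //; apply: image_cycle_edges. Qed.

Lemma even_preimage_circuit X : X \subset edges adj -> X != set0 -> odd_vertices X = set0 ->
  f @: X \in C -> exists2 D, graph_circuit adj D & f @: D = f @: X.
Proof.
move=> sXE X0 evenX fXC; have [p [gp sCX]] := find_cycle sg sXE evenX X0.
exists (cycle_edges p); first by exists p.
by case: mC => _ minC _; apply: minC (image_cycle_edges gp) fXC (imsetS f sCX).
Qed.

Lemma preimage_circuit_even X : even_sets_on_cycles adj -> X \subset edges adj ->
  f @: X \in C -> odd_vertices X = set0.
Proof.
move=> evenCyc sXE fXC; apply/eqP; apply: contraT => T0.
have evenT : ~~ odd #|odd_vertices X|.
  by apply: even_card_odd_vertices => e /(subsetP sXE) /(card_edge sg) ->.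
have [p [gp sTp]] := evenCyc _ T0 evenT.
have [P sPC PT] := boundary_in_cycle sg gp sTp evenT.
have [Up sp cp] := gp; have sCE := cycle_edges_sub sg cp.
have sPE : P \subset edges adj := subset_trans sPC sCE.
have UY : disjoint_union_of C (f @: symdiff X P).
  apply: disjoint_union_of_even; first exact: symdiff_subset.
  by rewrite odd_vertices_symdiff PT symdiffss.
have UP : disjoint_union_of C (f @: P).
  rewrite -(symdiffK X P) (imset_symdiff injf sXE) ?symdiff_subset //.
  exact: disjoint_union_of_symdiff (disjoint_union_of1 fXC) UY.
have [e eP] : exists e, e \in P.
  by apply/set0Pn; apply: contraNneq T0 => P0; rewrite -PT P0 odd_vertices0.
have [A [R [AC _ _ _ eA]]] := disjoint_union_of_split UP (imset_f f eP).
have sAP : A \subset f @: P by rewrite eA subsetUl.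
have ePC : P = cycle_edges p.
  apply/eqP; rewrite eqEsubset sPC -(imset_subset_in injf sCE sPE).
  by rewrite -(circuit_sub_image_cycle gp AC) // (subset_trans sAP) ?imsetS.
by move: T0; rewrite -PT ePC odd_vertices_cycle_edges ?eqxx.
Qed.

End CircuitInjection.

Lemma no_nontrivial_binary_ci_of_even_sets (V : finType) (adj : rel V) :
  simple_graph adj -> (exists x y, adj x y) -> even_sets_on_cycles adj ->
  no_nontrivial_binary_ci adj.
Proof.
move=> sg [x0 [y0 xy0]] evenCyc S C f mC bC fC [X0 X0C X0new].
have [injf fsurj _] := fC.
pose X := [set e in edges adj | f e \in X0].
have sXE : X \subset edges adj by apply/subsetP=> e /setIdP[].
have fX : f @: X = X0.
  apply/setP=> z; have /imsetP[e eE ->] : z \in f @: edges adj by rewrite fsurj inE.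
  by rewrite (mem_imset_in injf) // inE eE.
rewrite -fX in X0C X0new.
have [Xempty|Xn0] := eqVneq X set0; last first.
  have evenX := preimage_circuit_even sg mC bC fC evenCyc sXE X0C.
  by have [D gD eD] := even_preimage_circuit sg mC fC sXE Xn0 evenX X0C; apply: X0new gD eD.
(* An empty circuit would be contained in, hence equal to, the image of any circuit. *)
have [p0 [gp0 _]] : exists p, graph_cycle adj p /\ {subset [set x0; y0] <= p}.
  apply: evenCyc; first by apply/set0Pn; exists x0; rewrite !inE eqxx.
  by rewrite (card_edge sg) ?edges_adj.
apply: (X0new (cycle_edges p0)); first by exists p0.
by rewrite (circuit_sub_image_cycle mC fC gp0 X0C) // Xempty imset0 sub0set.
Qed.

Section CycleSpaceMatroid.

Variables (V : finType) (adj : rel V) (T : {set V}).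
Hypothesis sg : simple_graph adj.
Hypothesis T_off_cycles : forall p, graph_cycle adj p -> ~ {subset T <= p}.

Local Notation E := {e : {set V} | e \in edges adj}.

Definition odd_part (Z : {set E}) : {set V} := odd_vertices (val @: Z).

Definition spans_T (Z : {set E}) : bool := (odd_part Z == set0) || (odd_part Z == T).

Lemma odd_part_symdiff A B : odd_part (symdiff A B) = symdiff (odd_part A) (odd_part B).
Proof.
rewrite /odd_part -odd_vertices_symdiff (@imset_symdiff _ _ val setT) ?subsetT //.
by move=> x y _ _; apply: val_inj.
Qed.

Lemma spans_T_symdiff A B : spans_T A -> spans_T B -> spans_T (symdiff A B).
Proof.
rewrite /spans_T odd_part_symdiff.
by case/orP=> /eqP-> /orP[]/eqP->; rewrite ?symdiffss ?symdiffs0 ?symdiff0s eqxx ?orbT.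
Qed.

Section Embedding.

Variable s0 : E.

Lemma val_insubd_imset (D : {set {set V}}) : D \subset edges adj -> val @: (insubd s0 @: D) = D.
Proof.
move=> sDE; rewrite -imset_comp -[RHS]imset_id; apply: eq_in_imset => e eD /=.
by rewrite insubdK // (subsetP sDE).
Qed.

Lemma insubd_val_imset (Z : {set E}) : insubd s0 @: (val @: Z) = Z.
Proof. by rewrite -imset_comp -[RHS]imset_id; apply: eq_in_imset => z _ /=; rewrite valKd. Qed.

Lemma cycle_edges_min_sets p :
  graph_cycle adj p -> insubd s0 @: cycle_edges p \in min_sets spans_T.
Proof.
case=> Up sp cp; have sCE := cycle_edges_sub sg cp.
apply/min_setsP; split.
- by rewrite imset_eq0 cycle_edges_neq0.
- by rewrite /spans_T /odd_part val_insubd_imset // odd_vertices_cycle_edges ?eqxx.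
move=> Z sZC /orP[] /eqP oddZ Z0.
  suff <- : val @: Z = cycle_edges p by rewrite insubd_val_imset.
  apply/eqP; apply: contraT => ZnC.
  have : odd_part Z != set0.
    apply: (odd_vertices_proper_cycle_edges Up) => //; last by rewrite imset_eq0.
    by rewrite -(val_insubd_imset sCE) imsetS.
  by rewrite oddZ eqxx.
exfalso; apply: (T_off_cycles (And3 Up sp cp)) => v; rewrite -oddZ => /odd_vertices_sub.
case/bigcupP=> e eZ; apply: cycle_edges_vertex.
by rewrite -(val_insubd_imset sCE) (subsetP (imsetS val sZC)).
Qed.

End Embedding.

Lemma nontrivial_binary_ci_of_boundary (Y : {set {set V}}) :
  Y \subset edges adj -> odd_vertices Y = T -> T != set0 -> ~ no_nontrivial_binary_ci adj.
Proof.
move=> sYE oddY T0 noci.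
have [e0 e0Y] : exists e0, e0 \in Y.
  by apply/set0Pn; apply: contraNneq T0 => Y0; rewrite -oddY Y0 odd_vertices0.
pose s0 : E := exist _ e0 (subsetP sYE _ e0Y).
have fC : circuit_injection adj (min_sets spans_T) (insubd s0).
  split.
  - by move=> a b aE bE /(congr1 val); rewrite !insubdK.
  - by apply/setP=> z; rewrite inE -(valKd s0 z) imset_f ?(valP z).
  - by move=> D [p [gp ->]]; apply: cycle_edges_min_sets.
have mC : matroid (min_sets spans_T).
  by apply: min_sets_matroid spans_T_symdiff _; apply/set0Pn; exists s0.
apply: noci mC (min_sets_binary spans_T_symdiff) fC _.
have oddfY : odd_part (insubd s0 @: Y) = T by rewrite /odd_part val_insubd_imset.
have spans_fY : spans_T (insubd s0 @: Y) by rewrite /spans_T oddfY eqxx orbT.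
have [X XC oddX] : exists2 X, X \in min_sets spans_T & odd_part X != set0.
  by apply: (min_sets_nonzero spans_T_symdiff odd_part_symdiff spans_fY); rewrite oddfY.
exists X => // D [p [[Up sp cp] ->]] eX; move: oddX.
by rewrite -eX /odd_part val_insubd_imset ?odd_vertices_cycle_edges ?eqxx ?(cycle_edges_sub sg cp).
Qed.

End CycleSpaceMatroid.

Lemma even_sets_on_cycles_of_no_ci (V : finType) (adj : rel V) :
  simple_graph adj -> (forall v, exists u, adj v u) -> no_nontrivial_binary_ci adj ->
  even_sets_on_cycles adj.
Proof.
move=> sg noiso noci T T0 evenT; apply: NNPP => T_off.
have [connV|/forallPn[a /forallPn[b nab]]] := boolP [forall a, forall b, connect adj a b].
  have [Y sYE oddY] := boundary_in_connected sg (fun a => forallP (forallP connV a)) evenT.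
  apply: (nontrivial_binary_ci_of_boundary sg _ sYE oddY T0 noci) => p gp sTp.
  by apply: T_off; exists p.
(* For a, b in different components, the boundary of an edge at a and an edge
   at b contains a and b, which lie on no common circuit. *)
have [[a' aa'] [b' bb']] := (noiso a, noiso b).
case: (sg) => sym _.
have ab : a != b by apply: contraNneq nab => ->; apply: connect0.
have ab' : a != b' by apply: contraNneq nab => ->; apply: connect1; rewrite sym.
have a'b : a' != b by apply: contraNneq nab => <-; apply: connect1.
pose Y := [set [set a; a']; [set b; b']].
have sYE : Y \subset edges adj by rewrite subUset !sub1set !(edges_adj sg) aa' bb'.
have oddY : odd_vertices Y = symdiff [set a; a'] [set b; b'].
  rewrite /Y -symdiff_set2 ?odd_vertices_symdiff ?odd_vertices1 //.
  by apply: contraTneq (set21 a a') => ->; rewrite !inE negb_or ab ab'.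
have aY : a \in odd_vertices Y by rewrite oddY in_symdiff !inE eqxx (negbTE ab) (negbTE ab').
have bY : b \in odd_vertices Y.
  by rewrite oddY in_symdiff !inE eqxx (eq_sym b a) (negbTE ab) (eq_sym b a') (negbTE a'b).
apply: (nontrivial_binary_ci_of_boundary sg _ sYE erefl _ noci); last by apply/set0Pn; exists a.
move=> p [_ _ cp] sYp; move/negP: nab; apply.
exact: connect_cycle cp _ _ (sYp a aY) (sYp b bY).
Qed.

Lemma no_nontrivial_binary_ciE (V : finType) (adj : rel V) :
  simple_graph adj -> 0 < #|V| -> (forall v, exists u, adj v u) ->
  no_nontrivial_binary_ci adj <-> even_sets_on_cycles adj.
Proof.
move=> sg /card_gt0P[v _] noiso; split; first exact: even_sets_on_cycles_of_no_ci.
by apply: no_nontrivial_binary_ci_of_even_sets => //; have [u vu] := noiso v; exists v, u.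
Qed.

Lemma even_sets_on_cyclesE_even (V : finType) (adj : rel V) :
  0 < #|V| -> ~~ odd #|V| -> even_sets_on_cycles adj <-> hamiltonian adj.
Proof.
move=> V0 evenV; split=> [evenCyc|[p [gp allp]] T _ _]; last by exists p; split=> // v _.
have [p [gp sVp]] : exists p, graph_cycle adj p /\ {subset [set: V] <= p}.
  by apply: evenCyc; rewrite -?card_gt0 cardsT.
by exists p; split=> // v; apply: sVp; rewrite inE.
Qed.

Lemma even_sets_on_cyclesE_odd (V : finType) (adj : rel V) :
  1 < #|V| -> odd #|V| -> even_sets_on_cycles adj <-> almost_hamiltonian adj.
Proof.
move=> V1 oddV; split=> [evenCyc X cardX|almostH T _ evenT].
  by apply: evenCyc; rewrite -?card_gt0 cardX; case: #|V| V1 oddV => [|[|n]] //= _ /negbNE.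
have [w wT] : exists w, w \notin T.
  apply/existsP; rewrite -negb_forall; apply: contra evenT => /forallP allT.
  by rewrite (_ : T = setT) ?cardsT //; apply/setP=> v; rewrite inE allT.
have [p [gp sXp]] := almostH [set~ w] (cardsC1 w).
by exists p; split=> // v vT; apply: sXp; rewrite !inE; apply: contraNneq wT => <-.
Qed.

Theorem theorem2p2 (V : finType) (adj : rel V) :
  simple_graph adj ->
  0 < #|V| ->
  (forall v : V, exists u, adj v u) ->
  (~~ odd #|V| -> (no_nontrivial_binary_ci adj <-> hamiltonian adj)) /\
  (odd #|V| -> (no_nontrivial_binary_ci adj <-> almost_hamiltonian adj)).
Proof.
move=> sg V0 noiso; rewrite (no_nontrivial_binary_ciE sg V0 noiso).
split=> parityV; first exact: even_sets_on_cyclesE_even.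
apply: even_sets_on_cyclesE_odd => //.
have [v _] := card_gt0P V0; have [u vu] := noiso v.
by have := max_card [set v; u]; rewrite cards2 (adj_neq sg vu).
Qed.
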